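(* Let $D\ge3$, $3\le k\le D$, and let $\mathbf a:\mathbb R^D\to\mathcal H$ define a CMF dictionary with kernel $\varphi(\|\cdot-\cdot\|_p^p)$, where $\varphi$ is moreover right-differentiable at $0$ (finite right derivative). Then there exists $x_0>0$ such that for every $\Delta>0$ with $\Delta^p<x_0$ and every points $\theta^\star_1,\dots,\theta^\star_k\in\mathbb R^D$ satisfying $\|\theta^\star_\ell-\theta^\star_{\ell'}\|_p^p=2\Delta^p$ for $\ell\ne\ell'$ and $\|\theta^\star_\ell\|_p^p=\Delta^p$ for all $\ell$, the vector $\mathbf y=\sum_{\ell=1}^k\mathbf a(\theta^\star_\ell)$ satisfies $|\langle\mathbf a(\mathbf 0),\mathbf y\rangle|>|\langle\mathbf a(\theta^\star_\ell),\mathbf y\rangle|$ for every $\ell$; hence OMP with input $\mathbf y$ selects a parameter not in $\{\theta^\star_\ell\}_{\ell=1}^k$ at the first iteration. In the special case $\varphi(t)=e^{-\lambda t}$ ($\lambda>0$) this holds whenever $0<\Delta^p<\lambda^{-1}\log(k-1)$.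
   Context: CMF: $\varphi:[0,\infty)\to\mathbb R$ infinitely differentiable on $(0,\infty)$, right-continuous at $0$, $(-1)^n\varphi^{(n)}(x)\ge0$ for $x>0$, $n\ge0$. A CMF dictionary in dimension $D$ is $\mathbf a:\mathbb R^D\to\mathcal H$ ($\mathcal H$ real Hilbert) with $\langle\mathbf a(\theta),\mathbf a(\theta')\rangle=\varphi(\|\theta-\theta'\|_p^p)$, $\varphi$ a CMF, $\varphi(0)=1$, $\lim_{x\to\infty}\varphi(x)=0$, $0<p\le1$, $\|\theta\|_p^p=\sum_d|\theta[d]|^p$. The first OMP iteration with input $\mathbf y$ selects some element of $\arg\max_\theta|\langle\mathbf a(\theta),\mathbf y\rangle|$. *)

From Stdlib Require Import Reals Lra Lia.
Open Scope R_scope.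

Record InnerSpace := {
  vec :> Type;
  vadd : vec -> vec -> vec;
  vzero : vec;
  vopp : vec -> vec;
  vscal : R -> vec -> vec;
  inner : vec -> vec -> R;
  vadd_assoc : forall u v w, vadd u (vadd v w) = vadd (vadd u v) w;
  vadd_comm : forall u v, vadd u v = vadd v u;
  vadd_0 : forall u, vadd u vzero = u;
  vadd_opp : forall u, vadd u (vopp u) = vzero;
  vscal_1 : forall u, vscal 1 u = u;
  vscal_assoc : forall a b u, vscal a (vscal b u) = vscal (a * b) u;
  vscal_distr_v : forall a u v, vscal a (vadd u v) = vadd (vscal a u) (vscal a v);
  vscal_distr_s : forall a b u, vscal (a + b) u = vadd (vscal a u) (vscal b u);
  inner_sym : forall u v, inner u v = inner v u;
  inner_add_r : forall u v w, inner u (vadd v w) = inner u v + inner u w;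
  inner_scal_r : forall a u v, inner u (vscal a v) = a * inner u v;
  inner_pos : forall u, 0 <= inner u u;
  inner_def : forall u, inner u u = 0 -> u = vzero
}.

Fixpoint vsum (H : InnerSpace) (n : nat) (f : nat -> vec H) : vec H :=
  match n with
  | O => vzero H
  | S m => vadd H (vsum H m f) (f m)
  end.

(** |x|^p with the convention |0|^p = 0 (p > 0). *)
Definition abspow (x p : R) : R :=
  if Req_EM_T x 0 then 0 else Rpower (Rabs x) p.

(** Points of R^D are modelled as nat -> R; only coordinates 0..D-1 matter.
    ||theta||_p^p = sum_{d<D} |theta d|^p. *)
Fixpoint pnormp (D : nat) (p : R) (theta : nat -> R) : R :=
  match D with
  | O => 0
  | S d => pnormp d p theta + abspow (theta d) p
  end.

Definition vdiff (theta theta' : nat -> R) : nat -> R := fun d => theta d - theta' d.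
Definition origin : nat -> R := fun _ => 0.

Definition CMF (phi : R -> R) : Prop :=
  (exists f : nat -> R -> R,
      (forall x, 0 < x -> f O x = phi x) /\
      (forall n x, 0 < x -> derivable_pt_lim (f n) x (f (S n) x)) /\
      (forall n x, 0 < x -> 0 <= (-1) ^ n * f n x)) /\
  (forall eps, 0 < eps -> exists delta, 0 < delta /\
      forall x, 0 <= x < delta -> Rabs (phi x - phi 0) < eps).

Definition tends_to_0_at_infty (phi : R -> R) : Prop :=
  forall eps, 0 < eps -> exists M, forall x, M < x -> Rabs (phi x) < eps.

Definition right_differentiable_at_0 (phi : R -> R) : Prop :=
  exists L, forall eps, 0 < eps -> exists delta, 0 < delta /\
    forall h, 0 < h < delta -> Rabs ((phi h - phi 0) / h - L) < eps.

Definition CMF_dictionary (D : nat) (H : InnerSpace) (a : (nat -> R) -> vec H)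
  (phi : R -> R) (p : R) : Prop :=
  CMF phi /\ phi 0 = 1 /\ tends_to_0_at_infty phi /\ 0 < p <= 1 /\
  forall theta theta', inner H (a theta) (a theta') = phi (pnormp D p (vdiff theta theta')).

(** Conclusion for given Delta and atoms theta*_0..theta*_{k-1} (= ts 0 .. ts (k-1)). *)
Definition first_OMP_step_fails (D k : nat) (H : InnerSpace) (a : (nat -> R) -> vec H)
  (p Delta : R) : Prop :=
  forall ts : nat -> nat -> R,
    (forall l l', (l < k)%nat -> (l' < k)%nat -> l <> l' ->
        pnormp D p (vdiff (ts l) (ts l')) = 2 * Rpower Delta p) ->
    (forall l, (l < k)%nat -> pnormp D p (ts l) = Rpower Delta p) ->
    let y := vsum H k (fun l => a (ts l)) in
    (forall l, (l < k)%nat ->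
        Rabs (inner H (a origin) y) > Rabs (inner H (a (ts l)) y)) /\
    (forall theta,
        (forall theta', Rabs (inner H (a theta') y) <= Rabs (inner H (a theta) y)) ->
        forall l, (l < k)%nat -> ~ (forall d, (d < D)%nat -> theta d = ts l d)).

(** Let [t = Delta^p] and [y = a(theta_0) + ... + a(theta_(k-1))], where the
  atoms are pairwise at distance [2t] and at distance [t] from the origin.
  Since all correlations are kernel values,
      <a(0), y> = k phi(t)      and      <a(theta_l), y> = 1 + (k-1) phi(2t).
  Hence OMP fails at the first step as soon as the scalar "gap inequality"
      k phi(t) > 1 + (k-1) phi(2t)                                     (G)
  holds (with [phi(2t) >= 0], so that both correlations are nonnegative).

  It then
  proves (G) in the two regimes of the theorem:
  - near [t = 0]: a CMF is convex and nonconstant, which forces its right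
    derivative [L] at [0] to be negative; a first-order expansion of both
    sides of (G) then gives (G) for small [t], because [k > 2];
  - for [phi t = exp(-lam t)]: with [u = exp(-lam t)], (G) factors as
    [((k-1)u - 1)(1 - u) > 0], i.e. [1/(k-1) < u < 1]. *)

From Stdlib Require Import Reals Lra Lia Psatz.
Open Scope R_scope.

Lemma abspow_opp (x p : R) : abspow (- x) p = abspow x p.
Proof.
  unfold abspow; destruct (Req_EM_T (- x) 0), (Req_EM_T x 0); try lra; try reflexivity.
  now rewrite Rabs_Ropp.
Qed.

Lemma pnormp_ext (D : nat) (p : R) (f g : nat -> R) :
  (forall d, (d < D)%nat -> f d = g d) -> pnormp D p f = pnormp D p g.
Proof.
  induction D as [|D IH]; intros Hfg; simpl; auto.
  rewrite IH by (intros; apply Hfg; lia). now rewrite Hfg by lia.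
Qed.

Lemma pnormp_from_origin (D : nat) (p : R) (th : nat -> R) :
  pnormp D p (vdiff origin th) = pnormp D p th.
Proof.
  induction D as [|D IH]; simpl; auto. rewrite IH. f_equal. unfold vdiff, origin.
  replace (0 - th D) with (- th D) by ring. apply abspow_opp.
Qed.

Lemma pnormp_diag (D : nat) (p : R) (th : nat -> R) : pnormp D p (vdiff th th) = 0.
Proof.
  induction D as [|D IH]; simpl; auto. rewrite IH. unfold vdiff, abspow.
  replace (th D - th D) with 0 by ring. destruct (Req_EM_T 0 0); lra.
Qed.

Fixpoint rsum (n : nat) (g : nat -> R) : R :=
  match n with O => 0 | S m => rsum m g + g m end.

Lemma rsum_ext (n : nat) (f g : nat -> R) :
  (forall j, (j < n)%nat -> f j = g j) -> rsum n f = rsum n g.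
Proof.
  induction n as [|n IH]; intros Hfg; simpl; auto.
  rewrite IH by (intros; apply Hfg; lia). now rewrite Hfg by lia.
Qed.

Lemma rsum_const (n : nat) (g : nat -> R) (c : R) :
  (forall j, (j < n)%nat -> g j = c) -> rsum n g = INR n * c.
Proof.
  induction n as [|n IH]; intros Hg; cbn [rsum]; [simpl; ring|].
  rewrite IH, Hg by (intros; try apply Hg; lia). rewrite S_INR. ring.
Qed.

Lemma rsum_const_but_one (n l : nat) (g : nat -> R) (c : R) :
  (l < n)%nat -> (forall j, (j < n)%nat -> j <> l -> g j = c) -> g l = 1 ->
  rsum n g = 1 + (INR n - 1) * c.
Proof.
  induction n as [|n IH]; intros Hl Hg Hgl; [lia|]. cbn [rsum].
  destruct (Nat.eq_dec l n) as [->|Hne].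
  - rewrite (rsum_const n g c) by (intros; apply Hg; lia). rewrite Hgl, S_INR. ring.
  - rewrite IH by (auto; lia). rewrite Hg by lia. rewrite S_INR. ring.
Qed.

Lemma inner_zero_r (H : InnerSpace) (u : vec H) : inner H u (vzero H) = 0.
Proof.
  pose proof (inner_add_r H u (vzero H) (vzero H)) as E. rewrite vadd_0 in E. lra.
Qed.

Lemma inner_vsum (H : InnerSpace) (u : vec H) (n : nat) (f : nat -> vec H) :
  inner H u (vsum H n f) = rsum n (fun l => inner H u (f l)).
Proof.
  induction n as [|n IH]; simpl.
  - apply inner_zero_r.
  - now rewrite inner_add_r, IH.
Qed.

Section Correlations.

Variables (D k : nat) (H : InnerSpace) (a : (nat -> R) -> vec H) (phi : R -> R) (p : R).
Hypothesis kernel :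
  forall th th', inner H (a th) (a th') = phi (pnormp D p (vdiff th th')).

Variable ts : nat -> nat -> R.
Let y : vec H := vsum H k (fun l => a (ts l)).

Lemma correlation_origin (t : R) :
  (forall l, (l < k)%nat -> pnormp D p (ts l) = t) ->
  inner H (a origin) y = INR k * phi t.
Proof.
  intros Hnorm. unfold y. rewrite inner_vsum. apply rsum_const. intros j Hj.
  now rewrite kernel, pnormp_from_origin, Hnorm.
Qed.

Lemma correlation_atom (t : R) (l : nat) :
  phi 0 = 1 -> (l < k)%nat ->
  (forall i j, (i < k)%nat -> (j < k)%nat -> i <> j ->
     pnormp D p (vdiff (ts i) (ts j)) = 2 * t) ->
  inner H (a (ts l)) y = 1 + (INR k - 1) * phi (2 * t).
Proof.
  intros Hphi0 Hl Hdist. unfold y. rewrite inner_vsum.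
  apply rsum_const_but_one with l; auto.
  - intros j Hj Hjl. now rewrite kernel, Hdist.
  - now rewrite kernel, pnormp_diag.
Qed.

Lemma correlation_coordinates (th th' : nat -> R) :
  (forall d, (d < D)%nat -> th d = th' d) -> inner H (a th) y = inner H (a th') y.
Proof.
  intros Hagree. unfold y. rewrite !inner_vsum. apply rsum_ext. intros j Hj.
  rewrite !kernel. f_equal. apply pnormp_ext. intros d Hd. unfold vdiff. now rewrite Hagree.
Qed.

End Correlations.

Lemma omp_fails_of_gap (D k : nat) (H : InnerSpace) (a : (nat -> R) -> vec H)
  (phi : R -> R) (p Delta : R) :
  (forall th th', inner H (a th) (a th') = phi (pnormp D p (vdiff th th'))) ->
  phi 0 = 1 -> 0 <= phi (2 * Rpower Delta p) ->
  INR k * phi (Rpower Delta p) > 1 + (INR k - 1) * phi (2 * Rpower Delta p) ->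
  first_OMP_step_fails D k H a p Delta.
Proof.
  intros kernel Hphi0 Hpos Hgap ts Hdist Hnorm y.
  set (t := Rpower Delta p) in *.
  (* Both correlations are nonnegative, so the gap compares their absolute values. *)
  assert (Hbeats : forall l, (l < k)%nat ->
            Rabs (inner H (a origin) y) > Rabs (inner H (a (ts l)) y)).
  { intros l Hl. unfold y.
    rewrite (correlation_origin D k H a phi p kernel ts t),
            (correlation_atom D k H a phi p kernel ts t l) by auto.
    assert (1 <= INR k) by (apply (le_INR 1); lia).
    assert (0 <= (INR k - 1) * phi (2 * t)) by (apply Rmult_le_pos; lra).
    rewrite !Rabs_right; lra. }
  split; [exact Hbeats|].
  intros th Hmax l Hl Hagree.
  pose proof (Hmax origin) as Hle.
  unfold y in Hle, Hbeats.
  rewrite (correlation_coordinates D k H a phi p kernel ts th (ts l) Hagree) in Hle.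
  specialize (Hbeats l Hl). lra.
Qed.

Lemma nondecreasing_of_nonneg_derivative (g g' : R -> R) :
  (forall x, 0 < x -> derivable_pt_lim g x (g' x)) ->
  (forall x, 0 < x -> 0 <= g' x) ->
  forall x z, 0 < x -> x < z -> g x <= g z.
Proof.
  intros Hder Hpos x z Hx Hxz.
  destruct (MVT_cor2 g g' x z Hxz) as [xi [Exi Hxi]].
  { intros c Hc. apply Hder. lra. }
  assert (0 <= g' xi * (z - x)) by (apply Rmult_le_pos; [apply Hpos|]; lra). lra.
Qed.

Lemma right_increment_bounds (phi : R -> R) (L eps delta h : R) :
  (forall h, 0 < h < delta -> Rabs ((phi h - phi 0) / h - L) < eps) ->
  0 < h < delta -> (L - eps) * h < phi h - phi 0 < (L + eps) * h.
Proof.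
  intros Hquot Hh. specialize (Hquot h Hh). apply Rabs_def2 in Hquot.
  replace (phi h - phi 0) with ((phi h - phi 0) / h * h) by (field; lra).
  split; apply Rmult_lt_compat_r; lra.
Qed.

(** If the increments [phi(2h) - phi(h)] are at most [m h] for small [h], then
    the right derivative at [0], which is also the limit of these increments
    divided by [h], is at most [m]. *)
Lemma right_derivative_le_of_doubling (phi : R -> R) (L m c : R) :
  (forall eps, 0 < eps -> exists delta, 0 < delta /\
     forall h, 0 < h < delta -> Rabs ((phi h - phi 0) / h - L) < eps) ->
  0 < c -> (forall h, 0 < h < c -> phi (2 * h) - phi h <= m * h) ->
  L <= m.
Proof.
  intros HL Hc Hdouble. apply Rnot_lt_le; intro Hlt.
  destruct (HL ((L - m) / 3)) as [delta [Hdelta Hquot]]; [lra|].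
  set (h := Rmin (delta / 2) c / 2).
  assert (Hh0 : 0 < h) by (unfold h; pose proof (Rmin_pos (delta / 2) c); lra).
  assert (Hh1 : h < delta / 2) by (unfold h; pose proof (Rmin_l (delta / 2) c); lra).
  assert (Hh2 : h < c) by (unfold h; pose proof (Rmin_r (delta / 2) c); lra).
  pose proof (right_increment_bounds phi L _ delta h Hquot ltac:(lra)) as B1.
  pose proof (right_increment_bounds phi L _ delta (2 * h) Hquot ltac:(lra)) as B2.
  pose proof (Hdouble h ltac:(lra)). nra.
Qed.

Section CompletelyMonotone.

Variables (phi : R -> R) (f : nat -> R -> R).
Hypothesis f_phi : forall x, 0 < x -> f O x = phi x.
Hypothesis f_deriv : forall n x, 0 < x -> derivable_pt_lim (f n) x (f (S n) x).
Hypothesis f_sign : forall n x, 0 < x -> 0 <= (-1) ^ n * f n x.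

Lemma cmf_nonneg (x : R) : 0 < x -> 0 <= phi x.
Proof. intros Hx. rewrite <- f_phi by lra. pose proof (f_sign 0 x Hx). simpl in *. lra. Qed.

Lemma cmf_derivative_nondecreasing (x z : R) : 0 < x -> x < z -> f 1%nat x <= f 1%nat z.
Proof.
  apply nondecreasing_of_nonneg_derivative with (g' := f 2%nat); [apply f_deriv|].
  intros x' Hx'. pose proof (f_sign 2 x' Hx'). simpl in *. lra.
Qed.

Lemma cmf_negative_slope (e s : R) :
  0 < e -> e < s -> phi s < phi e -> exists c, 0 < c /\ f 1%nat c < 0.
Proof.
  intros He Hes Hdrop.
  destruct (MVT_cor2 (f 0%nat) (f 1%nat) e s Hes) as [c [Ec Hc]].
  { intros x Hx. apply f_deriv. lra. }
  rewrite !f_phi in Ec by lra.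
  exists c. split; [lra|].
  apply Rnot_le_lt; intro Hnn.
  assert (0 <= f 1%nat c * (s - e)) by (apply Rmult_le_pos; lra). lra.
Qed.

(** Below a point [c] of negative slope [m = phi'(c)], convexity gives
    [phi(2h) - phi(h) <= m h]; hence the right derivative at [0] is negative. *)
Lemma cmf_right_derivative_negative (L e s : R) :
  (forall eps, 0 < eps -> exists delta, 0 < delta /\
     forall h, 0 < h < delta -> Rabs ((phi h - phi 0) / h - L) < eps) ->
  0 < e -> e < s -> phi s < phi e -> L < 0.
Proof.
  intros HL He Hes Hdrop.
  destruct (cmf_negative_slope e s He Hes Hdrop) as [c [Hc Hslope]].
  enough (L <= f 1%nat c) by lra.
  apply (right_derivative_le_of_doubling phi L _ (c / 2) HL); [lra|].
  intros h Hh.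
  destruct (MVT_cor2 (f 0%nat) (f 1%nat) h (2 * h) ltac:(lra)) as [xi [Exi Hxi]].
  { intros x Hx. apply f_deriv. lra. }
  rewrite !f_phi in Exi by lra.
  assert (f 1%nat xi <= f 1%nat c) by (apply cmf_derivative_nondecreasing; lra).
  replace (2 * h - h) with h in Exi by ring.
  rewrite Exi. apply Rmult_le_compat_r; lra.
Qed.

End CompletelyMonotone.

Lemma drop_of_decay (phi : R -> R) :
  phi 0 = 1 -> tends_to_0_at_infty phi ->
  (forall eps, 0 < eps -> exists delta, 0 < delta /\
     forall x, 0 <= x < delta -> Rabs (phi x - phi 0) < eps) ->
  exists e s, 0 < e /\ e < s /\ phi s < phi e.
Proof.
  intros Hphi0 Hdecay Hcont.
  destruct (Hdecay (1 / 2)) as [M HM]; [lra|].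
  destruct (Hcont (1 / 2)) as [delta [Hdelta Hnear]]; [lra|].
  set (e := Rmin (delta / 2) 1).
  assert (He0 : 0 < e) by (unfold e; apply Rmin_pos; lra).
  assert (He1 : e < delta) by (unfold e; pose proof (Rmin_l (delta / 2) 1); lra).
  assert (He2 : e <= 1) by (unfold e; apply Rmin_r).
  set (s := Rmax M 1 + 1).
  assert (Hs : M < s /\ e < s) by (unfold s; pose proof (Rmax_l M 1); pose proof (Rmax_r M 1); lra).
  exists e, s. repeat split; try lra.
  specialize (HM s (proj1 Hs)). specialize (Hnear e ltac:(lra)).
  apply Rabs_def2 in HM. apply Rabs_def2 in Hnear. lra.
Qed.

(** Near [0]: first-order expansion with a negative right derivative, [K > 2]. *)
Lemma gap_near_zero (phi : R -> R) (L K : R) :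
  phi 0 = 1 -> L < 0 -> 2 < K ->
  (forall eps, 0 < eps -> exists delta, 0 < delta /\
     forall h, 0 < h < delta -> Rabs ((phi h - phi 0) / h - L) < eps) ->
  exists x0, 0 < x0 /\
    forall t, 0 < t < x0 -> K * phi t > 1 + (K - 1) * phi (2 * t).
Proof.
  intros Hphi0 HL HK Hder.
  (* With this [eps] the first-order terms of both sides of (G) coincide. *)
  set (eps := (2 - K) * L / (3 * K - 2)).
  assert (Heps : 0 < eps) by (unfold eps; apply Rdiv_lt_0_compat; nra).
  destruct (Hder eps Heps) as [delta [Hdelta Hquot]].
  exists (delta / 2). split; [lra|]. intros t Ht.
  pose proof (right_increment_bounds phi L eps delta t Hquot ltac:(lra)) as [B1 _].
  pose proof (right_increment_bounds phi L eps delta (2 * t) Hquot ltac:(lra)) as [_ B2].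
  rewrite Hphi0 in B1, B2.
  assert (Hlin : K * (L - eps) - (K - 1) * (L + eps) * 2 = 0) by (unfold eps; field; lra).
  nra.
Qed.

Lemma gap_exponential (lam K t : R) :
  0 < lam -> 2 < K -> 0 < t -> t < ln (K - 1) / lam ->
  K * exp (- lam * t) > 1 + (K - 1) * exp (- lam * (2 * t)).
Proof.
  intros Hlam HK Ht Htmax.
  replace (- lam * (2 * t)) with (- lam * t + - lam * t) by ring. rewrite exp_plus.
  set (u := exp (- lam * t)).
  assert (Hu1 : u < 1) by (unfold u; rewrite <- exp_0; apply exp_increasing; nra).
  assert (Hlt : lam * t < ln (K - 1)).
  { apply Rmult_lt_compat_l with (r := lam) in Htmax; auto.
    replace (lam * (ln (K - 1) / lam)) with (ln (K - 1)) in Htmax by (field; lra).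
    exact Htmax. }
  assert (Hu2 : / (K - 1) < u).
  { unfold u. rewrite <- (exp_ln (K - 1)) by lra. rewrite <- exp_Ropp.
    apply exp_increasing. lra. }
  assert (Hu3 : 1 < (K - 1) * u).
  { apply Rmult_lt_compat_l with (r := K - 1) in Hu2; [|lra].
    now rewrite Rinv_r in Hu2 by lra. }
  (* (G) reads ((K-1)u - 1)(1 - u) > 0. *)
  assert (0 < ((K - 1) * u - 1) * (1 - u)) by (apply Rmult_lt_0_compat; lra).
  nra.
Qed.

Theorem mainTheorem16 :
  forall (D k : nat) (H : InnerSpace) (a : (nat -> R) -> vec H) (phi : R -> R) (p : R),
    (3 <= D)%nat -> (3 <= k)%nat -> (k <= D)%nat ->
    CMF_dictionary D H a phi p ->
    right_differentiable_at_0 phi ->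
    (exists x0, 0 < x0 /\
       forall Delta, 0 < Delta -> Rpower Delta p < x0 ->
         first_OMP_step_fails D k H a p Delta) /\
    (forall lam, 0 < lam -> (forall x, 0 <= x -> phi x = exp (- lam * x)) ->
       forall Delta, 0 < Delta -> Rpower Delta p < ln (INR k - 1) / lam ->
         first_OMP_step_fails D k H a p Delta).
Proof.
  intros D k H a phi p _ Hk _ [[[f [Hf0 [Hfd Hfs]]] Hcont] [Hphi0 [Hdecay [_ kernel]]]] [L HL].
  assert (HK : 2 < INR k) by (apply (lt_INR 2); lia).
  assert (Ht0 : forall Delta, 0 < Rpower Delta p) by (intros; apply exp_pos).
  split.
  - destruct (drop_of_decay phi Hphi0 Hdecay Hcont) as [e [s [He [Hes Hdrop]]]].
    pose proof (cmf_right_derivative_negative phi f Hf0 Hfd Hfs L e s HL He Hes Hdrop) as HL0.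
    destruct (gap_near_zero phi L (INR k) Hphi0 HL0 HK HL) as [x0 [Hx0 Hgap]].
    exists x0. split; [exact Hx0|]. intros Delta _ Ht.
    specialize (Ht0 Delta).
    apply (omp_fails_of_gap D k H a phi p Delta kernel Hphi0).
    + apply (cmf_nonneg phi f Hf0 Hfs). lra.
    + apply Hgap. lra.
  - intros lam Hlam Hexp Delta _ Ht.
    specialize (Ht0 Delta).
    apply (omp_fails_of_gap D k H a phi p Delta kernel Hphi0).
    + rewrite Hexp by lra. left. apply exp_pos.
    + rewrite !Hexp by lra. now apply gap_exponential.
Qed.
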